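(* Let $(x_n)_n$ be a block sequence in the unit ball $B_J$ of $J$ such that $\lim_nI_\infty^*(x_n)=\alpha\ne0$ and $\lim_n\|x_n\|=\beta\ge0$, and let $0<\epsilon<1$. Then there is a subsequence $(x_{n_k})_k$ such that for every finitely supported sequence of reals $(\lambda_k)$, $(1-\epsilon)|\alpha|\,\big\|\sum_k\lambda_ke_k\big\|\le\big\|\sum_k\lambda_kx_{n_k}\big\|\le3(1+\epsilon)(|\alpha|+\beta)\big\|\sum_k\lambda_ke_k\big\|$. Hence $(x_{n_k})_k$ is equivalent to the unit vector basis $(e_k)$ of $J$.
   Context: The James space $J$ is the space of real sequences $x=(x(n))_{n\in\mathbb N}$ with $\|x\|=\sup\big(\sum_{i=1}^m|\sum_{k\in I_i}x(k)|^2\big)^{1/2}<\infty$, the supremum taken over all $m$ and all pairwise disjoint finite intervals $I_1,\dots,I_m$ of $\mathbb N$. The unit vectors $(e_n)$ form a basis of $J$; a block sequence is a sequence of nonzero finitely supported vectors with $\max\operatorname{supp}x_n<\min\operatorname{supp}x_{n+1}$. $I_\infty^*\in J^*$ is the functional $I_\infty^*(x)=\sum_{n=1}^\infty x(n)$. *)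

From HB Require Import structures.
From mathcomp Require Import all_boot all_order all_algebra.
From mathcomp Require Import all_classical all_reals all_analysis.
Set Implicit Arguments. Unset Strict Implicit. Unset Printing Implicit Defensive.
Import Order.TTheory GRing.Theory Num.Theory numFieldNormedType.Exports.
Local Open Scope classical_set_scope.
Local Open Scope ring_scope.

Section James.
Variable R : realType.

(* A finite family of intervals [a,b] = {a,...,b} of N, given as pairs (a,b)
   with a <= b, pairwise disjoint. *)
Definition intervals_ok (s : seq (nat * nat)) : bool :=
  all (fun p => (p.1 <= p.2)%N) s &&
  pairwise (fun p q => (p.2 < q.1)%N || (q.2 < p.1)%N) s.

Definition jsumsq (x : nat -> R) (s : seq (nat * nat)) : R :=
  \sum_(p <- s) (\sum_(p.1 <= k < p.2.+1) x k) ^+ 2.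

Definition jset (x : nat -> R) : set R :=
  [set r | exists s, intervals_ok s /\ r = jsumsq x s].

Definition inJ (x : nat -> R) : Prop := has_ubound (jset x).

Definition jnorm (x : nat -> R) : R := Num.sqrt (sup (jset x)).

Definition Iinf (x : nat -> R) : R := limn (series (x : R^nat)).

Definition unitv (k : nat) : nat -> R := fun m => if m == k then 1 else 0.

Definition fin_supp (x : nat -> R) : Prop := exists N, forall m, (N <= m)%N -> x m = 0.

Definition block_seq (x : nat -> nat -> R) : Prop :=
  forall n, (exists m, x n m != 0) /\ fin_supp (x n) /\
    (forall i j, x n i != 0 -> x n.+1 j != 0 -> (i < j)%N).

Definition lincomb (N : nat) (lam : nat -> R) (y : nat -> nat -> R) : nat -> R :=
  fun m => \sum_(k < N) lam k * y k m.

End James.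

From HB Require Import structures.
From mathcomp Require Import all_boot all_order all_algebra.
From mathcomp Require Import all_classical all_reals all_analysis.
From mathcomp Require Import ring lra zify.
Set Implicit Arguments. Unset Strict Implicit. Unset Printing Implicit Defensive.
Import Order.TTheory GRing.Theory Num.Theory numFieldNormedType.Exports.
Local Open Scope classical_set_scope.
Local Open Scope ring_scope.

(* Pass to a subsequence y_k = x_(n_k), supported on blocks [a_k, b_k], whose block
   sums I(y_k) = alpha + d_k have sum_k |d_k| <= delta := eps |alpha| / 4 and whose
   norms are at most beta + delta.  Let z = sum_k lam_k y_k and e = sum_k lam_k e_k.
   Lower bound: an interval [i, j] for e becomes the interval [a_i, b_j] for z, over
   which z sums to alpha (lam_i + ... + lam_j) up to an error sum_k lam_k d_k of
   square at most ||e||^2 delta^2.  Upper bound: the sum of z over an interval is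
   alpha times the sum of lam over the blocks it covers, plus the matching error
   terms, plus the contributions of the at most two blocks it cuts; the latter are
   controlled by ||y_k|| <= beta + delta, and altogether
   ||z||^2 <= 4 (alpha^2 + delta^2 + (beta + delta)^2) ||e||^2. *)

Section SquareSums.
Variable R : realDomainType.

Lemma sumsq_le_sqr_sum (I : Type) (s : seq I) (t : I -> R) :
  (forall i, 0 <= t i) -> \sum_(i <- s) t i ^+ 2 <= (\sum_(i <- s) t i) ^+ 2.
Proof.
move=> t_ge0; elim: s => [|i s IH]; first by rewrite !big_nil expr0n.
rewrite !big_cons; have : 0 <= \sum_(j <- s) t j by apply: sumr_ge0.
have := t_ge0 i; nra.
Qed.

Lemma sqr_sum_disjoint (N : nat) (g : nat -> R) :
  (forall k j, k != j -> g k * g j = 0) ->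
  (\sum_(0 <= k < N) g k) ^+ 2 = \sum_(0 <= k < N) g k ^+ 2.
Proof.
move=> gg0; elim: N => [|N IH]; first by rewrite !big_geq // expr0n.
rewrite !big_nat_recr //= -IH.
have [->|gN] := eqVneq (g N) 0; first by rewrite addr0 expr0n /= addr0.
suff -> : \sum_(0 <= k < N) g k = 0 by rewrite add0r expr0n /= add0r.
rewrite big_nat_cond big1 // => k /andP[/andP[_ kN] _].
have /eqP := gg0 k N (negbT (ltn_eqF kN)).
by rewrite mulf_eq0 (negbTE gN) orbF => /eqP.
Qed.

Lemma sqr_sum_two_disjoint (N : nat) (g : nat -> R) (L : pred nat) :
  (forall k j, k != j -> L k -> L j -> g k * g j = 0) ->
  (forall k j, k != j -> ~~ L k -> ~~ L j -> g k * g j = 0) ->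
  (\sum_(0 <= k < N) g k) ^+ 2 <= 2 * \sum_(0 <= k < N) g k ^+ 2.
Proof.
move=> disjL disjNL.
pose gl k := if L k then g k else 0; pose gr k := if L k then 0 else g k.
have split_g : \sum_(0 <= k < N) g k = \sum_(0 <= k < N) gl k + \sum_(0 <= k < N) gr k.
  rewrite -big_split /=; apply: eq_bigr => k _; rewrite /gl /gr.
  by case: (L k); rewrite ?addr0 ?add0r.
have split_sq : \sum_(0 <= k < N) g k ^+ 2 =
    \sum_(0 <= k < N) gl k ^+ 2 + \sum_(0 <= k < N) gr k ^+ 2.
  rewrite -big_split /=; apply: eq_bigr => k _; rewrite /gl /gr.
  by case: (L k); rewrite expr0n ?addr0 ?add0r.
have sq_gl : (\sum_(0 <= k < N) gl k) ^+ 2 = \sum_(0 <= k < N) gl k ^+ 2.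
  apply: sqr_sum_disjoint => k j kj; rewrite /gl.
  by case: ifP => Lk; case: ifP => Lj; rewrite ?mul0r ?mulr0 //; exact: disjL.
have sq_gr : (\sum_(0 <= k < N) gr k) ^+ 2 = \sum_(0 <= k < N) gr k ^+ 2.
  apply: sqr_sum_disjoint => k j kj; rewrite /gr.
  by case: ifP => Lk; case: ifP => Lj; rewrite ?mul0r ?mulr0 //; apply: disjNL; rewrite ?Lk ?Lj.
rewrite split_g split_sq -sq_gl -sq_gr.
have := sqr_ge0 (\sum_(0 <= k < N) gl k - \sum_(0 <= k < N) gr k); nra.
Qed.

Lemma sum_if_const (I : Type) (s : seq I) (P : pred I) (c : R) :
  \sum_(p <- s) (if P p then c else 0) = c *+ count P s.
Proof.
elim: s => [|p s IH]; first by rewrite big_nil.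
by rewrite big_cons IH /=; case: (P p); rewrite ?add0r // mulrS.
Qed.

Lemma sumsq_cover_le (I : Type) (s : seq I) (P : I -> nat -> bool) (c : nat -> R) M :
  (forall k, (count (P^~ k) s <= 1)%N) ->
  \sum_(p <- s) (\sum_(0 <= k < M) (if P p k then c k else 0)) ^+ 2
    <= (\sum_(0 <= k < M) `|c k|) ^+ 2.
Proof.
move=> cover.
pose T p : R := \sum_(0 <= k < M) (if P p k then `|c k| else 0).
have T_ge0 p : 0 <= T p by apply: sumr_ge0 => k _; case: ifP.
have sqr_le_T p : (\sum_(0 <= k < M) (if P p k then c k else 0)) ^+ 2 <= T p ^+ 2.
  rewrite -real_normK ?num_real // lerXn2r ?nnegrE //.
  apply: le_trans (ler_norm_sum _ _ _) _; apply: ler_sum => k _.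
  by case: ifP; rewrite ?normr0.
have sumT : \sum_(p <- s) T p <= \sum_(0 <= k < M) `|c k|.
  rewrite exchange_big /=; apply: ler_sum => k _.
  by rewrite sum_if_const -[leRHS]mulr1n; apply: ler_wpMn2l; [exact: normr_ge0|exact: cover].
apply: le_trans (_ : \sum_(p <- s) T p ^+ 2 <= _).
  by apply: ler_sum => p _; exact: sqr_le_T.
apply: le_trans (sumsq_le_sqr_sum s T_ge0) _.
rewrite lerXn2r ?nnegrE //; exact: sumr_ge0.
Qed.

End SquareSums.

Lemma sum_inv_pow2 (R : numFieldType) (N : nat) :
  \sum_(0 <= k < N) ((2 : R) ^+ k.+1)^-1 = 1 - ((2 : R) ^+ N)^-1.
Proof.
elim: N => [|N IH]; first by rewrite big_geq // expr0 invr1 subrr.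
rewrite big_nat_recr //= IH exprS; field.
by rewrite expf_neq0 // pnatr_eq0.
Qed.

Lemma find_iota_homo (P : pred nat) (n k : nat) :
  (forall i j, (i <= j)%N -> P i -> P j) -> (k < n)%N ->
  P k = (find P (iota 0 n) <= k)%N.
Proof.
move=> homoP kn; apply/idP/idP => [Pk|fk].
  by rewrite leqNgt; apply/negP => /(before_find 0); rewrite nth_iota // add0n Pk.
have : (find P (iota 0 n) < size (iota 0 n))%N by rewrite size_iota; lia.
rewrite -has_find => /(nth_find 0); rewrite nth_iota ?add0n; last exact: leq_ltn_trans fk kn.
exact: homoP.
Qed.

Lemma exists_incr_above (g : nat -> nat) :
  exists phi : nat -> nat, (forall k, (phi k < phi k.+1)%N) /\ forall k, (g k <= phi k)%N.
Proof.
exists (fun k => k + \sum_(i < k.+1) g i)%N; split => k.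
  by rewrite [X in (_ < _ + X)%N]big_ord_recr /=; lia.
by rewrite big_ord_recr /=; lia.
Qed.

Definition itv_disjoint (p q : nat * nat) : bool := (p.2 < q.1)%N || (q.2 < p.1)%N.

Lemma count_itv_disjoint_contain (s : seq (nat * nat)) (u v : nat) : (u <= v)%N ->
  pairwise itv_disjoint s -> (count (fun p => (p.1 <= u)%N && (v <= p.2)%N) s <= 1)%N.
Proof.
move=> uv; elim: s => [|p s IH] //= /andP[disj_p /IH cnt].
have [/andP[pu vp]|_] := boolP ((p.1 <= u)%N && (v <= p.2)%N) => //=.
rewrite add1n ltnS leqn0 eqn0Ngt -has_count; apply/hasPn => q qs.
by apply/negP => /andP[qu vq]; move/allP: disj_p => /(_ q qs) /orP[]; lia.
Qed.

Lemma itv_chain_lt (a b : nat -> nat) :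
  (forall k, (a k <= b k)%N) -> (forall k, (b k < a k.+1)%N) ->
  forall k j, (k < j)%N -> (b k < a j)%N.
Proof.
move=> ab ba k; elim=> [//|j IH]; rewrite ltnS leq_eqVlt => /orP[/eqP->//|kj].
have := IH kj; have := ab j; have := ba j; lia.
Qed.

Section ConstantBounds.
Variable R : realFieldType.
Variables (eps w : R).
Hypothesis eps01 : 0 < eps < 1.

Lemma absorb_perturbation (E Z : R) : 0 <= E ->
  eps * w ^+ 2 * E <= eps * (1 + eps) * Z + (1 + eps) * (E * (eps * w / 4) ^+ 2) ->
  ((1 - eps) * w) ^+ 2 * E <= Z.
Proof.
case/andP: eps01 => eps_gt0 eps_lt1 E_ge0 lower.
have wE_ge0 : 0 <= w ^+ 2 * E by rewrite mulr_ge0 ?sqr_ge0.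
have absorbed : w ^+ 2 * E * (1 - (1 + eps) * eps / 16) <= (1 + eps) * Z.
  rewrite -(ler_pM2l eps_gt0); move: lower.
  have -> : eps * (w ^+ 2 * E * (1 - (1 + eps) * eps / 16)) =
     eps * w ^+ 2 * E - (1 + eps) * (E * (eps * w / 4) ^+ 2) by field.
  lra.
have const : (1 + eps) * (1 - eps) ^+ 2 <= 1 - (1 + eps) * eps / 16 by nra.
rewrite -(ler_pM2l (_ : 0 < 1 + eps)); last lra.
apply: le_trans absorbed; have := ler_wpM2r wE_ge0 const; rewrite exprMn; lra.
Qed.

Lemma upper_constant (beta : R) : 0 <= w -> 0 <= beta ->
  4 * (w ^+ 2 + (eps * w / 4) ^+ 2 + (beta + eps * w / 4) ^+ 2)
    <= (3 * (1 + eps) * (w + beta)) ^+ 2.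
Proof.
case/andP: eps01 => eps_gt0 eps_lt1 w_ge0 beta_ge0.
set t := eps * w / 4.
have t_ge0 : 0 <= t by rewrite /t; nra.
have t_le : t <= w / 4 by rewrite /t; nra.
have step1 : w ^+ 2 + t ^+ 2 + (beta + t) ^+ 2 <= (w + beta + 2 * t) ^+ 2.
  have := mulr_ge0 w_ge0 beta_ge0; have := mulr_ge0 w_ge0 t_ge0; nra.
have step2 : (w + beta + 2 * t) ^+ 2 <= (3 / 2 * (w + beta)) ^+ 2 by nra.
have step3 : 4 * (3 / 2 * (w + beta)) ^+ 2 <= (3 * (1 + eps) * (w + beta)) ^+ 2.
  have := mulr_ge0 (ltW eps_gt0) (addr_ge0 w_ge0 beta_ge0); nra.
lra.
Qed.

End ConstantBounds.

Lemma le_sqrtr_sqr (R : rcfType) (a z : R) : 0 <= a -> a ^+ 2 <= z -> a <= Num.sqrt z.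
Proof.
move=> a_ge0 az; rewrite -[leLHS](ger0_norm a_ge0) -sqrtr_sqr ler_sqrt //.
exact: le_trans (sqr_ge0 a) az.
Qed.

Section JamesNorm.
Variable R : realType.
Implicit Types (y : nat -> R) (s : seq (nat * nat)).

Definition isum y (a b : nat) : R := \sum_(a <= m < b.+1) y m.

Lemma isum_trunc y a b M : (forall m, (M <= m)%N -> y m = 0) ->
  isum y a b = \sum_(0 <= m < M) (if (a <= m <= b)%N then y m else 0).
Proof.
move=> yM; pose K := maxn M b.+1.
transitivity (\sum_(0 <= m < K) (if (a <= m <= b)%N then y m else 0)).
  rewrite /isum (big_nat_widenl _ 0) // (big_nat_widen _ _ K) ?leq_maxr // big_mkcond.
  by apply: eq_bigr => m _; rewrite ltnS.
rewrite [RHS](big_nat_widen _ _ K) ?leq_maxl // [RHS]big_mkcond.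
by apply: eq_bigr => m _; case: ltnP => // Mm; rewrite yM ?if_same.
Qed.

Lemma jsumsq_ge0 y s : 0 <= jsumsq y s.
Proof. by apply: sumr_ge0 => p _; apply: sqr_ge0. Qed.

Lemma jset_neq0 y : jset y !=set0.
Proof. by exists 0, [::]; rewrite /jsumsq big_nil. Qed.

Lemma jsumsq_le_sup y s : inJ y -> intervals_ok s -> jsumsq y s <= sup (jset y).
Proof. by move=> yJ sok; apply: sup_upper_bound; [split; [exact: jset_neq0|]|exists s]. Qed.

Lemma sup_jset_ge0 y : inJ y -> 0 <= sup (jset y).
Proof.
by move=> yJ; exact: le_trans (jsumsq_ge0 y [::]) (jsumsq_le_sup yJ (isT : intervals_ok [::])).
Qed.

Lemma sup_jset_le y C : (forall s, intervals_ok s -> jsumsq y s <= C) -> sup (jset y) <= C.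
Proof. by move=> yC; apply: ge_sup; [exact: jset_neq0|move=> r [s [sok ->]]; exact: yC]. Qed.

Lemma sqr_jnorm y : inJ y -> jnorm y ^+ 2 = sup (jset y).
Proof. by move=> yJ; rewrite /jnorm sqr_sqrtr // sup_jset_ge0. Qed.

Lemma jsumsq_le_l1 y M s : (forall m, (M <= m)%N -> y m = 0) ->
  intervals_ok s -> jsumsq y s <= (\sum_(0 <= m < M) `|y m|) ^+ 2.
Proof.
move=> yM /andP[_ disj]; rewrite /jsumsq.
under eq_bigr do rewrite -/(isum y _ _) (isum_trunc _ _ yM).
apply: sumsq_cover_le => m; exact: count_itv_disjoint_contain.
Qed.

Lemma inJ_finsupp y M : (forall m, (M <= m)%N -> y m = 0) -> inJ y.
Proof.
by move=> yM; exists ((\sum_(0 <= m < M) `|y m|) ^+ 2) => _ [s [sok ->]]; exact: jsumsq_le_l1.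
Qed.

Lemma Iinf_isum y a b : (forall m, ~~ (a <= m <= b)%N -> y m = 0) -> Iinf y = isum y a b.
Proof.
move=> ysupp; have tail m : (b.+1 <= m)%N -> y m = 0 by move=> bm; apply: ysupp; lia.
apply: cvg_lim => //; apply: cvg_near_cst; exists b.+1 => // n /= bn.
rewrite seriesEnat /= (isum_trunc _ _ tail) -(prednK (leq_ltn_trans (leq0n b) bn)).
rewrite -/(isum y 0 n.-1) (isum_trunc _ _ tail); apply: eq_big_nat => m /andP[_ mb].
case: (boolP (a <= m <= b)%N) => [/andP[am _]|/ysupp ->]; last by rewrite if_same.
by rewrite /= (_ : (m <= n.-1)%N) //; lia.
Qed.

Lemma lincomb_unitv N (lam : nat -> R) m :
  lincomb N lam (@unitv R) m = if (m < N)%N then lam m else 0.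
Proof.
rewrite /lincomb /unitv; case: ltnP => [mN|Nm].
  rewrite (bigD1 (Ordinal mN)) //= eqxx mulr1 big1 ?addr0 // => i iN.
  by rewrite (_ : (m == i) = false) ?mulr0 //; apply/negbTE; rewrite eq_sym.
rewrite big1 // => i _; rewrite (_ : (m == i) = false) ?mulr0 //.
by apply/eqP; have := ltn_ord i; lia.
Qed.

End JamesNorm.

Section BlockCombination.
Variables (R : realType) (y : nat -> nat -> R) (a b : nat -> nat) (alpha beta delta : R).
Variables (N : nat) (lam : nat -> R).
Hypothesis le_ab : forall k, (a k <= b k)%N.
Hypothesis lt_ba : forall k, (b k < a k.+1)%N.
Hypothesis y_supp : forall k m, ~~ (a k <= m <= b k)%N -> y k m = 0.
Hypothesis y_inJ : forall k, inJ (y k).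
Hypothesis jnorm_y : forall k, jnorm (y k) <= beta + delta.
Hypothesis delta_ge0 : 0 <= delta.
Hypothesis dev_y : forall k, `|isum (y k) (a k) (b k) - alpha| <= delta / 2 ^+ k.+1.
Hypothesis lam_supp : forall k, (N <= k)%N -> lam k = 0.

Let dev k := isum (y k) (a k) (b k) - alpha.
Let e := lincomb N lam (@unitv R).
Let z := lincomb N lam y.
Let E := sup (jset e).
Let Z := sup (jset z).

Let b_lt_a := itv_chain_lt le_ab lt_ba.

Lemma a_homo k j : (k <= j)%N -> (a k <= a j)%N.
Proof. by rewrite leq_eqVlt => /orP[/eqP->//|/b_lt_a]; have := le_ab k; lia. Qed.

Lemma b_homo k j : (k <= j)%N -> (b k <= b j)%N.
Proof. by rewrite leq_eqVlt => /orP[/eqP->//|/b_lt_a]; have := le_ab j; lia. Qed.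

Lemma e_lam m : e m = lam m.
Proof. by rewrite /e lincomb_unitv; case: ltnP => // /lam_supp ->. Qed.

Lemma z_sum m : z m = \sum_(0 <= k < N) lam k * y k m.
Proof. by rewrite /z /lincomb big_mkord. Qed.

Lemma inJ_e : inJ e.
Proof. by apply: (inJ_finsupp (M := N)) => m /lam_supp <-; exact: e_lam. Qed.

Lemma inJ_z : inJ z.
Proof.
apply: (inJ_finsupp (M := b N)) => m bm; rewrite z_sum big_nat_cond big1 // => k.
by case/andP=> /andP[_ /b_lt_a kN] _; rewrite y_supp ?mulr0 //; have := le_ab N; lia.
Qed.

Lemma isum_e c d : isum e c d = isum lam c d.
Proof. by apply: eq_bigr => m _; rewrite e_lam. Qed.

Lemma isum_z c d : isum z c d = \sum_(0 <= k < N) lam k * isum (y k) c d.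
Proof.
rewrite /isum; under eq_bigr do rewrite z_sum.
by rewrite exchange_big /=; apply: eq_bigr => k _; rewrite big_distrr.
Qed.

Lemma isum_y_cover k c d : (c <= a k)%N -> (b k <= d)%N ->
  isum (y k) c d = isum (y k) (a k) (b k).
Proof.
have tail m : ((b k).+1 <= m)%N -> y k m = 0 by move=> bm; apply: y_supp; lia.
move=> ca bd; rewrite !(isum_trunc _ _ tail); apply: eq_big_nat => m _.
case: (boolP (a k <= m <= b k)%N) => [/andP[am mb]|/y_supp ->]; last by rewrite !if_same.
by rewrite (_ : (c <= m <= d)%N) //; lia.
Qed.

Lemma isum_y_out k c d : (d < a k)%N || (b k < c)%N -> isum (y k) c d = 0.
Proof.
move=> out; rewrite /isum big_nat_cond big1 // => m /andP[/andP[cm md] _].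
by apply: y_supp; lia.
Qed.

Lemma sqr_lam_le k : lam k ^+ 2 <= E.
Proof.
have sok : intervals_ok [:: (k, k)] by rewrite /intervals_ok /= leqnn.
have := jsumsq_le_sup inJ_e sok.
by rewrite /jsumsq big_seq1 -/(isum e k k) isum_e /isum big_nat1.
Qed.

Lemma sumsq_lam_le : \sum_(0 <= k < N) lam k ^+ 2 <= E.
Proof.
pose s := [seq (k, k) | k <- index_iota 0 N].
have sok : intervals_ok s.
  rewrite /intervals_ok all_map pairwise_map; apply/andP; split; first by apply/allP => k _ /=.
  apply: sub_pairwise (_ : pairwise ltn _); first by move=> i j /= ->.
  by rewrite -sorted_pairwise; [exact: iota_ltn_sorted|exact: ltn_trans].
apply: le_trans (jsumsq_le_sup inJ_e sok); rewrite /jsumsq big_map le_eqVlt; apply/orP; left.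
by apply/eqP/eq_bigr => k _; rewrite -/(isum e k k) isum_e /isum big_nat1.
Qed.

Lemma sum_abs_dev_le : \sum_(0 <= k < N) `|dev k| <= delta.
Proof.
apply: le_trans (_ : \sum_(0 <= k < N) delta * (2 ^+ k.+1)^-1 <= _).
  by apply: ler_sum => k _; exact: dev_y.
rewrite -big_distrr sum_inv_pow2 /=.
have : 0 <= delta / 2 ^+ N by rewrite divr_ge0 ?exprn_ge0.
lra.
Qed.

Lemma sqr_sum_lam_dev_le : (\sum_(0 <= k < N) `|lam k * dev k|) ^+ 2 <= E * delta ^+ 2.
Proof.
have E_ge0 : 0 <= E := sup_jset_ge0 inJ_e.
have lam_le k : `|lam k| <= Num.sqrt E.
  by apply: le_sqrtr_sqr => //; rewrite real_normK ?num_real ?sqr_lam_le.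
have sum_le : \sum_(0 <= k < N) `|lam k * dev k| <= Num.sqrt E * delta.
  apply: le_trans (_ : \sum_(0 <= k < N) Num.sqrt E * `|dev k| <= _).
    by apply: ler_sum => k _; rewrite normrM ler_wpM2r.
  by rewrite -big_distrr ler_wpM2l ?sqrtr_ge0 ?sum_abs_dev_le.
rewrite -[E]sqr_sqrtr // -exprMn lerXn2r ?nnegrE ?sumr_ge0 ?mulr_ge0 ?sqrtr_ge0 //.
Qed.

Lemma sumsq_dev_cover_le (s : seq (nat * nat)) (P : nat * nat -> nat -> bool) :
  (forall k, (count (P^~ k) s <= 1)%N) ->
  \sum_(p <- s) (\sum_(0 <= k < N) (if P p k then lam k * dev k else 0)) ^+ 2 <= E * delta ^+ 2.
Proof. by move=> cover; apply: le_trans (sumsq_cover_le _ _ cover) sqr_sum_lam_dev_le. Qed.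

Lemma isum_z_blocks c d : isum z (a c) (b d) =
  alpha * isum lam c d + \sum_(0 <= k < N) (if (c <= k <= d)%N then lam k * dev k else 0).
Proof.
rewrite isum_z (isum_trunc _ _ lam_supp) big_distrr -big_split /=.
apply: eq_big_nat => k _; case: (boolP (c <= k <= d)%N) => [/andP[ck kd]|].
  by rewrite isum_y_cover ?a_homo ?b_homo // /dev; ring.
rewrite negb_and -!ltnNge => out; rewrite isum_y_out ?mulr0 ?addr0 //.
by case/orP: out => /b_lt_a ->; rewrite ?orbT.
Qed.

Lemma lower_jsumsq eps s : 0 < eps -> intervals_ok s ->
  eps * alpha ^+ 2 * jsumsq e s <= eps * (1 + eps) * Z + (1 + eps) * (E * delta ^+ 2).
Proof.
move=> eps_gt0 sok; case/andP: (sok) => le_s disj_s.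
pose t := [seq (a p.1, b p.2) | p <- s].
have tok : intervals_ok t.
  rewrite /intervals_ok all_map pairwise_map; apply/andP; split.
    by apply/allP => p /(allP le_s) /a_homo ap; exact: leq_trans ap (le_ab _).
  by apply: sub_pairwise disj_s => p q /orP[] /b_lt_a /= ->; rewrite ?orbT.
pose D p := \sum_(0 <= k < N) (if (p.1 <= k <= p.2)%N then lam k * dev k else 0).
have sqr_le p : eps * alpha ^+ 2 * isum lam p.1 p.2 ^+ 2 <=
    eps * (1 + eps) * isum z (a p.1) (b p.2) ^+ 2 + (1 + eps) * D p ^+ 2.
  rewrite isum_z_blocks -/(D p); set X := isum lam p.1 p.2.
  (* the difference of the two sides is (eps (alpha X + D p) + D p)^2 *)
  have := sqr_ge0 (eps * (alpha * X + D p) + D p); nra.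
have sum_le : eps * alpha ^+ 2 * jsumsq e s <=
    eps * (1 + eps) * jsumsq z t + (1 + eps) * \sum_(p <- s) D p ^+ 2.
  rewrite /jsumsq big_map !big_distrr -big_split /=; apply: ler_sum => p _.
  by rewrite -/(isum e _ _) isum_e -/(isum z _ _).
apply: le_trans sum_le _; apply: lerD; apply: ler_wpM2l.
- by apply: mulr_ge0; lra.
- exact: jsumsq_le_sup inJ_z tok.
- lra.
- by apply: sumsq_dev_cover_le => k; exact: count_itv_disjoint_contain.
Qed.

Lemma lower_sup eps : 0 < eps -> alpha != 0 ->
  eps * alpha ^+ 2 * E <= eps * (1 + eps) * Z + (1 + eps) * (E * delta ^+ 2).
Proof.
move=> eps_gt0 alpha_neq0.
have c_gt0 : 0 < eps * alpha ^+ 2 by rewrite mulr_gt0 // exprn_even_gt0.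
rewrite mulrC -ler_pdivlMr //; apply: sup_jset_le => s sok.
by rewrite ler_pdivlMr // mulrC; exact: lower_jsumsq.
Qed.

Let covers (p : nat * nat) k := (p.1 <= a k)%N && (b k <= p.2)%N.
Let covered_sum p := \sum_(0 <= k < N) (if covers p k then lam k else 0).
Let covered_dev p := \sum_(0 <= k < N) (if covers p k then lam k * dev k else 0).
Let partial p k := if covers p k then 0 else isum (y k) p.1 p.2.

Lemma isum_z_split p : isum z p.1 p.2 =
  alpha * covered_sum p + covered_dev p + \sum_(0 <= k < N) lam k * partial p k.
Proof.
rewrite isum_z big_distrr -!big_split /=; apply: eq_bigr => k _.
rewrite /partial; case: (boolP (covers p k)) => [/andP[ca bd]|_]; last by rewrite !mulr0 !add0r.
by rewrite isum_y_cover // /dev; ring.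
Qed.

(* A block not covered by [p] meets [p] only if it straddles one of its two ends,
   and distinct blocks straddle distinct ends. *)
Lemma sqr_sum_partial_le p : (\sum_(0 <= k < N) lam k * partial p k) ^+ 2
  <= 2 * \sum_(0 <= k < N) (lam k * partial p k) ^+ 2.
Proof.
have straddle_right k :
    ~~ (a k < p.1 <= b k)%N -> lam k * partial p k != 0 -> (a k <= p.2 < b k)%N.
  rewrite /partial => notL; case: ifP => [_|notcov]; first by rewrite mulr0 eqxx.
  case: (leqP (a k) p.2) => [ap|pa]; last by rewrite isum_y_out ?pa // mulr0 eqxx.
  case: (leqP p.1 (b k)) => [pb|bp]; last by rewrite isum_y_out ?bp ?orbT // mulr0 eqxx.
  move=> _; move: notL notcov; rewrite /covers pb andbT -leqNgt => pa.
  by rewrite pa /= => /negbT; rewrite -ltnNge => ->.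
apply: (@sqr_sum_two_disjoint _ _ _ (fun k => (a k < p.1 <= b k)%N)) => k j kj /=.
  move=> /andP[ak kb] /andP[aj jb]; exfalso.
  by move: kj; rewrite neq_ltn => /orP[] /b_lt_a; lia.
move=> Lk Lj; apply/eqP; apply: contraT; rewrite mulf_eq0 negb_or => /andP[/(straddle_right _ Lk)].
case/andP=> ak kb /(straddle_right _ Lj) /andP[aj jb].
by move: kj; rewrite neq_ltn => /orP[] /b_lt_a; have := le_ab k; have := le_ab j; lia.
Qed.

Lemma sumsq_covered_dev_le s : intervals_ok s -> \sum_(p <- s) covered_dev p ^+ 2 <= E * delta ^+ 2.
Proof.
case/andP=> _ disj; apply: sumsq_dev_cover_le => k.
exact: count_itv_disjoint_contain (le_ab k) disj.
Qed.

Lemma sumsq_partial_le s : intervals_ok s ->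
  \sum_(p <- s) \sum_(0 <= k < N) (lam k * partial p k) ^+ 2 <= E * (beta + delta) ^+ 2.
Proof.
move=> sok; rewrite exchange_big /=.
apply: le_trans (_ : \sum_(0 <= k < N) lam k ^+ 2 * (beta + delta) ^+ 2 <= _); last first.
  by rewrite -big_distrl /= ler_wpM2r ?sqr_ge0 ?sumsq_lam_le.
apply: ler_sum => k _; under eq_bigr do rewrite exprMn.
rewrite -big_distrr /= ler_wpM2l ?sqr_ge0 //.
have jnorm_ge0 : 0 <= jnorm (y k) by exact: sqrtr_ge0.
have sup_le : sup (jset (y k)) <= (beta + delta) ^+ 2.
  by rewrite -sqr_jnorm // lerXn2r ?nnegrE ?jnorm_y //; exact: le_trans (jnorm_y k).
apply: le_trans sup_le; apply: le_trans (jsumsq_le_sup (y_inJ k) sok); apply: ler_sum => p _.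
by rewrite /partial; case: ifP => _ //; rewrite expr0n sqr_ge0.
Qed.

Let first_ge c := find (fun k => (c <= a k)%N) (iota 0 N).
Let first_gt d := find (fun k => (d < b k)%N) (iota 0 N).

Lemma covers_index p k : (k < N)%N -> covers p k = (first_ge p.1 <= k < first_gt p.2)%N.
Proof.
move=> kN; rewrite /covers (find_iota_homo (P := fun k => (p.1 <= a k)%N) _ kN); last first.
  by move=> i j /a_homo ij ci; exact: leq_trans ci ij.
congr andb; rewrite leqNgt (find_iota_homo (P := fun k => (p.2 < b k)%N) _ kN) -?ltnNge //.
by move=> i j /b_homo ij di; exact: leq_trans di ij.
Qed.

Lemma first_gt_le d : (first_gt d <= N)%N.
Proof. by have := find_size (fun k => (d < b k)%N) (iota 0 N); rewrite size_iota. Qed.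

Lemma first_gt_pred_lt c d : (d < c)%N -> (0 < first_gt d)%N -> ((first_gt d).-1 < first_ge c)%N.
Proof.
move=> dc gt_pos; have kN : ((first_gt d).-1 < N)%N by have := first_gt_le d; lia.
have bd : (b (first_gt d).-1 <= d)%N.
  rewrite leqNgt (find_iota_homo (P := fun k => (d < b k)%N) _ kN) -?ltnNge.
    by rewrite prednK.
  by move=> i j /b_homo ij di; exact: leq_trans di ij.
rewrite ltnNge -(find_iota_homo (P := fun k => (c <= a k)%N) _ kN).
  by have := le_ab (first_gt d).-1; lia.
by move=> i j /a_homo ij ci; exact: leq_trans ci ij.
Qed.

(* The blocks covered by pairwise disjoint intervals form pairwise disjoint
   intervals of indices, so the covered sums of [lam] are interval sums of [e]. *)
Lemma sumsq_covered_sum_le s : intervals_ok s -> \sum_(p <- s) covered_sum p ^+ 2 <= E.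
Proof.
case/andP=> _ disj.
pose P := [pred p : nat * nat | first_ge p.1 < first_gt p.2]%N.
have covered_isum p : covered_sum p = if P p then isum lam (first_ge p.1) (first_gt p.2).-1 else 0.
  rewrite /covered_sum /=; case: ifP => Pp.
    rewrite (isum_trunc _ _ lam_supp); apply: eq_big_nat => k /andP[_ kN].
    by rewrite covers_index //; congr (if _ then _ else _); apply/idP/idP; lia.
  rewrite big_nat_cond big1 // => k /andP[/andP[_ kN] _].
  by rewrite covers_index //; case: ifP => // /andP[]; move/negbT: Pp; lia.
pose t := [seq (first_ge p.1, (first_gt p.2).-1) | p <- [seq p <- s | P p]].
have tok : intervals_ok t.
  rewrite /intervals_ok all_map pairwise_map; apply/andP; split.
    by rewrite all_filter; apply/allP => p _ /=; apply/implyP; lia.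
  apply: (sub_in_pairwise _ (filter_all P s) (pairwise_filter P disj)).
  move=> p q; rewrite !inE => Pp Pq /orP[] ?; apply/orP; [left|right];
    by apply: first_gt_pred_lt => //; lia.
have -> : \sum_(p <- s) covered_sum p ^+ 2 = jsumsq e t.
  rewrite /jsumsq big_map big_filter [RHS]big_mkcond /=; apply: eq_bigr => p _.
  by rewrite covered_isum /=; case: ifP => _; rewrite ?expr0n // -/(isum e _ _) isum_e.
exact: jsumsq_le_sup inJ_e tok.
Qed.

Lemma upper_jsumsq s : intervals_ok s ->
  jsumsq z s <= 4 * (alpha ^+ 2 * E + E * delta ^+ 2 + E * (beta + delta) ^+ 2).
Proof.
move=> sok; pose Q p := \sum_(0 <= k < N) (lam k * partial p k) ^+ 2.
have sqr_le p : isum z p.1 p.2 ^+ 2 <=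
    4 * alpha ^+ 2 * covered_sum p ^+ 2 + 4 * covered_dev p ^+ 2 + 4 * Q p.
  rewrite isum_z_split; have := sqr_sum_partial_le p; rewrite -/(Q p).
  set r := \sum_(0 <= k < N) lam k * partial p k.
  have := sqr_ge0 (alpha * covered_sum p + covered_dev p - r).
  have := sqr_ge0 (alpha * covered_sum p - covered_dev p); nra.
apply: le_trans (_ : \sum_(p <- s) (4 * alpha ^+ 2 * covered_sum p ^+ 2 + 4 * covered_dev p ^+ 2 +
    4 * Q p) <= _); first by apply: ler_sum => p _; exact: sqr_le.
rewrite !big_split /= -!big_distrr /=.
have := sumsq_covered_sum_le sok; have := sumsq_covered_dev_le sok; have := sumsq_partial_le sok.
have := sqr_ge0 alpha; nra.
Qed.

Lemma upper_sup : Z <= 4 * (alpha ^+ 2 * E + E * delta ^+ 2 + E * (beta + delta) ^+ 2).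
Proof. by apply: sup_jset_le => s; exact: upper_jsumsq. Qed.

Lemma jnorm_lincomb_bounds eps :
  0 < eps < 1 -> alpha != 0 -> 0 <= beta -> delta = eps * `|alpha| / 4 ->
  (1 - eps) * `|alpha| * jnorm e <= jnorm z /\
  jnorm z <= 3 * (1 + eps) * (`|alpha| + beta) * jnorm e.
Proof.
move=> eps01 alpha_neq0 beta_ge0 delta_def; case/andP: (eps01) => eps_gt0 eps_lt1.
have E_ge0 : 0 <= E := sup_jset_ge0 inJ_e.
have alpha2 : alpha ^+ 2 = `|alpha| ^+ 2 by rewrite real_normK ?num_real.
rewrite /jnorm -/E -/Z; split.
  apply: le_sqrtr_sqr; first by rewrite !mulr_ge0 ?sqrtr_ge0 //; lra.
  rewrite exprMn sqr_sqrtr //; apply: absorb_perturbation => //.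
  by rewrite -alpha2 -delta_def; exact: lower_sup.
have c_ge0 : 0 <= 3 * (1 + eps) * (`|alpha| + beta) by rewrite !mulr_ge0 ?addr_ge0 //; lra.
rewrite -[X in _ <= X * _](ger0_norm c_ge0) -sqrtr_sqr -sqrtrM ?sqr_ge0 //.
rewrite ler_sqrt; last by rewrite mulr_ge0 ?sqr_ge0.
apply: le_trans (upper_sup) _; rewrite alpha2 delta_def.
have := ler_wpM2r E_ge0 (upper_constant eps01 (normr_ge0 alpha) beta_ge0); lra.
Qed.

End BlockCombination.

Lemma block_seq_supports (R : realType) (x : nat -> nat -> R) : block_seq x ->
  exists a b : nat -> nat, [/\ forall n, (a n <= b n)%N, forall n, (b n < a n.+1)%N &
    forall n m, ~~ (a n <= m <= b n)%N -> x n m = 0].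
Proof.
move=> blk.
have ends n : exists ab : nat * nat, [/\ x n ab.1 != 0, x n ab.2 != 0 &
    forall m, x n m != 0 -> (ab.1 <= m <= ab.2)%N].
  case: (blk n) => [[m0 xm0] [[M xM] _]].
  have ex : exists m, x n m != 0 by exists m0.
  have ub m : x n m != 0 -> (m <= M)%N.
    by move=> xm; rewrite leqNgt; apply: contra xm => /ltnW /xM ->.
  case: (ex_minnP ex) => lo xlo lo_min; case: (ex_maxnP ex ub) => hi xhi hi_max.
  by exists (lo, hi); split => // m xm; rewrite lo_min ?hi_max.
have [f fP] := choice ends.
exists (fun n => (f n).1), (fun n => (f n).2); split.
- by move=> n; case: (fP n) => x1 _ /(_ _ x1) /andP[].
- move=> n; case: (fP n) => _ x2 _; case: (fP n.+1) => x1 _ _.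
  by case: (blk n) => _ [_]; apply.
- move=> n m out; apply/eqP; apply: contraNT out; by case: (fP n) => _ _; apply.
Qed.

Lemma cvg_eventually_le (R : numFieldType) (u : nat -> R) (l eps : R) :
  u @ \oo --> l -> 0 < eps -> exists M, forall n, (M <= n)%N -> `|u n - l| <= eps.
Proof.
move/cvgrPdist_le => uP /uP [M _ uM].
by exists M => n Mn; rewrite distrC; exact: uM.
Qed.

Theorem mainTheorem13 (R : realType) (x : nat -> nat -> R) (alpha beta eps : R) :
  block_seq x ->
  (forall n, inJ (x n) /\ jnorm (x n) <= 1) ->
  (fun n => Iinf (x n)) @ \oo --> alpha -> alpha != 0 ->
  (fun n => jnorm (x n)) @ \oo --> beta -> 0 <= beta ->
  0 < eps < 1 ->
  exists phi : nat -> nat, (forall k, (phi k < phi k.+1)%N) /\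
    forall (N : nat) (lam : nat -> R), (forall k, (N <= k)%N -> lam k = 0) ->
      (1 - eps) * `|alpha| * jnorm (lincomb N lam (@unitv R))
        <= jnorm (lincomb N lam (fun k => x (phi k))) /\
      jnorm (lincomb N lam (fun k => x (phi k)))
        <= 3 * (1 + eps) * (`|alpha| + beta) * jnorm (lincomb N lam (@unitv R)).
Proof.
move=> blk x_ball Ix_cvg alpha_neq0 jx_cvg beta_ge0 eps01.
have [a [b [le_ab lt_ba x_supp]]] := block_seq_supports blk.
pose delta := eps * `|alpha| / 4.
have delta_gt0 : 0 < delta by rewrite divr_gt0 // mulr_gt0 ?normr_gt0 //; case/andP: eps01.
have tail k : exists M, forall n, (M <= n)%N ->
    `|Iinf (x n) - alpha| <= delta / 2 ^+ k.+1 /\ jnorm (x n) <= beta + delta.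
  have [M1 IM1] := cvg_eventually_le Ix_cvg (divr_gt0 delta_gt0 (exprn_gt0 k.+1 (ltr0Sn R 1))).
  have [M2 jM2] := cvg_eventually_le jx_cvg delta_gt0.
  exists (maxn M1 M2) => n; rewrite geq_max => /andP[/IM1 Ix /jM2 /ler_normlW jx].
  by split => //; lra.
have [g gP] := choice tail.
have [phi [phi_incr phi_ge]] := exists_incr_above g.
exists phi; split => // N lam lam_supp.
apply: (@jnorm_lincomb_bounds _ _ (a \o phi) (b \o phi) _ _ delta) => //.
- by move=> k; exact: le_ab.
- by move=> k; exact: itv_chain_lt le_ab lt_ba _ _ (phi_incr k).
- by move=> k; exact: x_supp.
- by move=> k; exact: (x_ball _).1.
- by move=> k; exact: (gP k _ (phi_ge k)).2.
- exact: ltW.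
- by move=> k; rewrite /= -(Iinf_isum (x_supp _)); exact: (gP k _ (phi_ge k)).1.
Qed.
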